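(* Let $\nu$ be a vector norm on $\mathbb{R}^n$, let $H=\{x\in\mathbb{R}^n: e^Tx=0\}$ where $e=(1,\ldots,1)^T$, and let $P_1,P_2,\ldots$ be a sequence of $n\times n$ column stochastic matrices. If $\nu^0_H(P_i)\le 1$ for all $i$ and the sequence $\nu^0_H(P_1),\nu^0_H(P_2),\ldots$ has an accumulation point $c$ with $c<1$, then all general products of the sequence are weakly ergodic.
   Context: A column stochastic matrix is a nonnegative matrix each of whose columns sums to $1$; $H$ is invariant under every such matrix. The coefficient of ergodicity is $\nu^0_H(P)=\sup_{0\ne x\in H}\nu(Px)/\nu(x)$. General products: given a permutation $\sigma$ of the positive integers, set $B_i=P_{\sigma(i)}$; for an integer $p\ge0$ and each $r\ge1$, $C_{p,r}$ is a product of $B_{p+1},\ldots,B_{p+r}$, each used exactly once, in some order (chosen arbitrarily and independently for each $r$). All general products are weakly ergodic if for every such choice of $\sigma$, $p$ and orders, $\lim_{r\to\infty}C_{p,r}x=0$ for all $x\in H$. *)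

From HB Require Import structures.
From mathcomp Require Import all_boot all_order all_fingroup all_algebra.
From mathcomp Require Import all_classical all_reals all_analysis.
Set Implicit Arguments. Unset Strict Implicit. Unset Printing Implicit Defensive.
Import Order.TTheory GRing.Theory Num.Theory.
Import numFieldNormedType.Exports.
Local Open Scope classical_set_scope.
Local Open Scope ring_scope.

Definition is_vnorm (R : realType) (n : nat) (nu : 'cV[R]_n -> R) : Prop :=
  [/\ forall x, 0 <= nu x,
      forall x, nu x = 0 -> x = 0,
      forall (a : R) x, nu (a *: x) = `|a| * nu x &
      forall x y, nu (x + y) <= nu x + nu y].

Definition inH (R : realType) (n : nat) (x : 'cV[R]_n) : Prop :=
  \sum_(i < n) x i ord0 = 0.

Definition col_stochastic (R : realType) (n : nat) (P : 'M[R]_n) : Prop :=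
  (forall i j, 0 <= P i j) /\ (forall j, \sum_(i < n) P i j = 1).

Definition coeff_erg (R : realType) (n : nat) (nu : 'cV[R]_n -> R)
  (P : 'M[R]_n) : R :=
  sup [set nu (P *m x) / nu x | x in [set x | inH x /\ x <> 0]].

Definition accumulation_point (R : realType) (a : nat -> R) (c : R) : Prop :=
  forall (eps : R), 0 < eps -> forall N : nat, exists2 i : nat, (N <= i)%N & `|a i - c| < eps.

(* General product C_{p,r}: product of B_{p+1},...,B_{p+r} (B_i = P_{sigma i}),
   each used once, in the order given by the permutation ord r of 'I_r:
   C_{p,r} = B_{p+1+ord r 0} * B_{p+1+ord r 1} * ... * B_{p+1+ord r (r-1)}. *)
Definition gen_prod (R : realType) (n : nat) (P : nat -> 'M[R]_n)
  (sigma : nat -> nat) (p : nat) (ord : forall r : nat, {perm 'I_r}) (r : nat)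
  : 'M[R]_n :=
  \prod_(k < r) P (sigma (p + (ord r k).+1)%N).

(* all general products are weakly ergodic. The sequence is indexed by nat
   (P 0 = P_1 etc.); sigma ranges over bijections of the index set. *)
Definition all_gen_prod_weakly_ergodic (R : realType) (n : nat)
  (P : nat -> 'M[R]_n) : Prop :=
  forall (sigma : nat -> nat), bijective sigma ->
  forall (p : nat) (ord : forall r : nat, {perm 'I_r}) (x : 'cV[R]_n),
    inH x -> (fun r => gen_prod P sigma p ord r *m x) @ \oo --> (0 : 'cV[R]_n).

From HB Require Import structures.
From mathcomp Require Import all_boot all_order all_fingroup all_algebra.
From mathcomp Require Import all_classical all_reals all_analysis.
From mathcomp Require Import lra zify.
Import Order.TTheory GRing.Theory Num.Theory.
Import numFieldNormedType.Exports.
Set Implicit Arguments. Unset Strict Implicit. Unset Printing Implicit Defensive.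
Local Open Scope classical_set_scope.
Local Open Scope ring_scope.

(* Each factor is nonexpansive on H for nu, and infinitely many of the P_i have
   coefficient of ergodicity below a fixed q < 1, since c < 1 is an accumulation
   point. A bijective reindexing keeps infinitely many such factors, so the number
   of them among B_(p+1), ..., B_(p+r) tends to infinity with r, whatever the order
   of multiplication; hence nu (C_(p,r) x) <= q ^ (that number) * nu x tends to 0.
   Equivalence of norms in finite dimension turns this into C_(p,r) x --> 0. *)

Section mx_normr.
Variable R : realType.

Lemma mx_normr_entry m n (A : 'M[R]_(m, n)) i j : `|A i j| <= `|A|.
Proof.
rewrite [leRHS]/Num.Def.normr/= mx_normrE.
exact: (le_bigmax _ (fun ij : 'I_m * 'I_n => `|A ij.1 ij.2|) (i, j)).
Qed.

Lemma mx_normr_le m n (A : 'M[R]_(m, n)) (M : R) :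
  0 <= M -> (forall i j, `|A i j| <= M) -> `|A| <= M.
Proof.
move=> M_ge0 AM.
by rewrite [leLHS]/Num.Def.normr/= mx_normrE (bigmax_le _ M_ge0) // => -[i j] _.
Qed.

Lemma mx_normr_trmx m n (A : 'M[R]_(m, n)) : `|A^T| = `|A|.
Proof.
apply/le_anti/andP; split; apply: mx_normr_le => // i j.
  by rewrite mxE; exact: mx_normr_entry.
by have := mx_normr_entry A^T j i; rewrite mxE.
Qed.

Lemma mx_normr_mulmx_le m n p (A : 'M[R]_(m, n)) (B : 'M[R]_(n, p)) :
  `|A *m B| <= n%:R * `|A| * `|B|.
Proof.
apply: mx_normr_le => [|i j]; first by rewrite !mulr_ge0.
rewrite mxE; apply: le_trans (ler_norm_sum _ _ _) _.
apply: le_trans (_ : _ <= \sum_(k < n) `|A| * `|B|) _; last first.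
  by rewrite sumr_const card_ord -mulrA mulr_natl.
apply: ler_sum => k _.
by rewrite normrM ler_pM // mx_normr_entry.
Qed.

Lemma trmx_continuous m n : continuous (@trmx R m n).
Proof.
move=> A; apply/(@cvgrPdist_lt _ _ _ (nbhs A) _) => e e_gt0.
near=> B; rewrite -linearB mx_normr_trmx; near: B; exact: cvgr_dist_lt.
Unshelve. all: by end_near. Qed.

Lemma rV_unit_sphere_compact n : compact [set y : 'rV[R]_n | `|y| = 1].
Proof.
apply: bounded_closed_compact.
  by exists 1; split => // M M_gt1 y /= ->; exact: ltW.
rewrite (_ : [set y | _] = Num.norm @^-1` [set 1]) //.
apply: preimage_closed => [y _|]; first exact: norm_continuous.
exact: (accessible_closed_set1 (hausdorff_accessible (@Rhausdorff R))).
Qed.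

End mx_normr.

Section hyperplane.
Variables (R : realType) (n : nat).

Lemma inH_mulmx (P : 'M[R]_n) x : col_stochastic P -> inH x -> inH (P *m x).
Proof.
move=> [_ P_col] Hx; rewrite /inH.
under eq_bigr do rewrite mxE.
rewrite exchange_big /=.
by under eq_bigr do rewrite -mulr_suml P_col mul1r.
Qed.

Lemma inH_prod_mulmx (I : Type) (s : seq I) (F : I -> 'M[R]_n) x :
  (forall i, col_stochastic (F i)) -> inH x -> inH ((\prod_(i <- s) F i) *m x).
Proof.
move=> F_stoch Hx; elim: s => [|a s IH]; first by rewrite big_nil mul1mx.
by rewrite big_cons -mulmxA; exact: inH_mulmx.
Qed.

End hyperplane.

Section vector_norm.
Variables (R : realType) (n : nat) (nu : 'cV[R]_n -> R).
Hypothesis nu_norm : is_vnorm nu.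

Lemma nu_ge0 x : 0 <= nu x. Proof. by case: nu_norm. Qed.

Lemma nu_gt0 x : x != 0 -> 0 < nu x.
Proof.
case: nu_norm => _ nu_eq0 _ _ x0.
by rewrite lt_neqAle nu_ge0 andbT eq_sym; apply: contra x0 => /eqP /nu_eq0 ->.
Qed.

Lemma nuZ a x : nu (a *: x) = `|a| * nu x. Proof. by case: nu_norm. Qed.

Lemma nu0 : nu 0 = 0.
Proof. by rewrite -(scale0r (0 : 'cV[R]_n)) nuZ normr0 mul0r. Qed.

Lemma nuD x y : nu (x + y) <= nu x + nu y. Proof. by case: nu_norm. Qed.

Lemma nu_sum (I : Type) (s : seq I) (F : I -> 'cV[R]_n) :
  nu (\sum_(i <- s) F i) <= \sum_(i <- s) nu (F i).
Proof.
elim: s => [|a s IH]; first by rewrite !big_nil nu0.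
by rewrite !big_cons; apply: le_trans (nuD _ _) _; exact: lerD.
Qed.

Lemma nu_dist x y : `|nu x - nu y| <= nu (x - y).
Proof.
have nuB z t : nu z - nu t <= nu (z - t).
  by rewrite lerBlDr; have := nuD (z - t) t; rewrite subrK.
rewrite ler_norml nuB andbT lerNl opprB.
by rewrite -[nu (x - y)]mul1r -normrN1 -nuZ scaleN1r opprB nuB.
Qed.

Lemma nu_le_mx_normr : exists2 C, 0 <= C & forall x, nu x <= C * `|x|.
Proof.
exists (\sum_(i < n) nu (delta_mx i ord0)); first by apply: sumr_ge0 => i _; exact: nu_ge0.
move=> x; rewrite {1}(matrix_sum_delta x).
apply: le_trans (nu_sum _ _) _; rewrite mulr_suml; apply: ler_sum => i _.
by rewrite big_ord1 nuZ [leRHS]mulrC ler_wpM2r ?nu_ge0 ?mx_normr_entry.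
Qed.

Lemma nu_continuous : continuous nu.
Proof.
have [C C_ge0 nuC] := nu_le_mx_normr.
have C1_gt0 : 0 < C + 1 by rewrite ltr_wpDl.
move=> x; apply/(@cvgrPdist_le _ _ _ (nbhs x) _) => e e_gt0.
near=> y; apply: le_trans (nu_dist _ _) _; apply: le_trans (nuC _) _.
apply: le_trans (_ : _ <= (C + 1) * `|x - y|) _; first by rewrite ler_wpM2r ?lerDl.
rewrite mulrC -ler_pdivlMr //; near: y; apply: cvgr_dist_le => //; exact: divr_gt0.
Unshelve. all: by end_near. Qed.

Lemma mx_normr_le_nu : exists2 m, 0 < m & forall x, m * `|x| <= nu x.
Proof.
pose S := [set y : 'rV[R]_n | `|y| = 1].
pose g (y : 'rV[R]_n) := nu y^T.
have g_cont : continuous g.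
  by move=> y; apply: continuous_comp; [exact: trmx_continuous | exact: nu_continuous].
have S_normalize x : x != 0 -> S (`|x|^-1 *: x)^T.
  by move=> x0; rewrite /S /= mx_normr_trmx normrZ normfV normr_id mulVf ?normr_eq0.
have [[y Sy]|S_empty] := pselect (S !=set0); last first.
  exists 1 => // x; have [->|x0] := eqVneq x 0; first by rewrite normr0 mulr0 nu_ge0.
  by case: S_empty; exists (`|x|^-1 *: x)^T; exact: S_normalize.
have [c /set_mem Sc c_min] := EVT_min_rV (ex_intro _ y Sy) (@rV_unit_sphere_compact R n)
  (continuous_subspaceT g_cont).
exists (g c).
  apply: nu_gt0; apply/eqP => /(congr1 trmx); rewrite trmxK trmx0 => c0.
  by move: Sc; rewrite /S /= c0 normr0 => /eqP; rewrite eq_sym oner_eq0.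
move=> x; have [->|x0] := eqVneq x 0; first by rewrite normr0 mulr0 nu_ge0.
have := c_min _ (mem_set (S_normalize x x0)).
by rewrite /g trmxK nuZ normfV normr_id ler_pdivlMl ?normr_gt0 // [_ * `|x|]mulrC.
Qed.

Lemma nu_cvg0 (T : Type) (F : set_system T) (FF : Filter F) (u : T -> 'cV[R]_n) :
  (fun t => nu (u t)) @ F --> 0 -> u @ F --> (0 : 'cV[R]_n).
Proof.
have [m m_gt0 mnu] := mx_normr_le_nu.
move=> /cvgr0Pnorm_le nu_u; apply/cvgr0Pnorm_le => e e_gt0.
apply: filterS (nu_u _ (mulr_gt0 e_gt0 m_gt0)) => t.
rewrite ger0_norm ?nu_ge0 // => nu_le; rewrite -(ler_pM2l m_gt0).
by apply: le_trans (mnu _) _; rewrite mulrC.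
Qed.

Lemma nu_mulmx_le (A : 'M[R]_n) : exists K, forall x, nu (A *m x) <= K * nu x.
Proof.
have [C C_ge0 nuC] := nu_le_mx_normr; have [m m_gt0 mnu] := mx_normr_le_nu.
exists (C * (n%:R * `|A|) / m) => x.
apply: le_trans (nuC _) _; rewrite -!mulrA ler_wpM2l //.
apply: le_trans (mx_normr_mulmx_le A x) _; rewrite -mulrA !ler_wpM2l //.
by rewrite ler_pdivlMl // mnu.
Qed.

Lemma nu_mulmx_le_coeff_erg (A : 'M[R]_n) x :
  inH x -> nu (A *m x) <= coeff_erg nu A * nu x.
Proof.
move=> Hx; have [->|x0] := eqVneq x 0; first by rewrite mulmx0 nu0 mulr0.
(* [coeff_erg] is a [sup], meaningless unless the ratio set is bounded above. *)
have [K nuK] := nu_mulmx_le A.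
have ub : has_ubound [set nu (A *m z) / nu z | z in [set z | inH z /\ z <> 0]].
  by exists K => _ [z [_ /eqP z0] <-]; rewrite ler_pdivrMr ?nu_gt0.
rewrite -ler_pdivrMr ?nu_gt0 //; apply: (ub_le_sup ub).
by exists x => //; split => //; exact/eqP.
Qed.

Lemma nu_prod_mulmx_le (I : Type) (s : seq I) (F : I -> 'M[R]_n) (q : R) x :
  0 <= q -> (forall i, col_stochastic (F i)) ->
  (forall i, coeff_erg nu (F i) <= 1) -> inH x ->
  nu ((\prod_(i <- s) F i) *m x) <=
    q ^+ (\sum_(i <- s) nat_of_bool (coeff_erg nu (F i) < q)%R)%N * nu x.
Proof.
move=> q_ge0 F_stoch F_le1 Hx.
elim: s => [|a s IH]; first by rewrite !big_nil mul1mx expr0 mul1r.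
rewrite !big_cons -mulmxA.
apply: le_trans (nu_mulmx_le_coeff_erg _ (inH_prod_mulmx _ F_stoch Hx)) _.
case: ltP => [Fa_lt_q|_] /=.
  rewrite add1n exprS -mulrA.
  by apply: le_trans (ler_wpM2r (nu_ge0 _) (ltW Fa_lt_q)) _; exact: ler_wpM2l.
by rewrite add0n; apply: le_trans IH; rewrite ler_piMl ?nu_ge0.
Qed.

Lemma nu_gen_prod_mulmx_le (P : nat -> 'M[R]_n) sigma p ord (q : R) r x :
  0 <= q -> (forall i, col_stochastic (P i)) ->
  (forall i, coeff_erg nu (P i) <= 1) -> inH x ->
  nu (gen_prod P sigma p ord r *m x) <=
    q ^+ (\sum_(k < r) nat_of_bool (coeff_erg nu (P (sigma (p + k.+1)%N)) < q)%R)%N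
    * nu x.
Proof.
move=> q_ge0 P_stoch P_le1 Hx.
apply: le_trans (nu_prod_mulmx_le _ q_ge0 (fun=> P_stoch _) (fun=> P_le1 _) Hx) _.
by rewrite [X in _ <= q ^+ X * _](reindex_inj (@perm_inj _ (ord r))).
Qed.

End vector_norm.

Definition infinitely_often (a : pred nat) := forall N, exists2 i, (N <= i)%N & a i.

Lemma accumulation_point_infinitely_often (R : realType) (u : nat -> R) c q :
  accumulation_point u c -> c < q -> infinitely_often (fun i => u i < q).
Proof.
move=> acc c_lt_q N; have [|i Ni ui_c] := acc (q - c) _ N; first by rewrite subr_gt0.
by exists i => //; move: ui_c; rewrite ltr_norml => /andP[_]; rewrite ltrD2r.
Qed.

Lemma infinitely_often_bij (a : pred nat) sigma :
  bijective sigma -> infinitely_often a -> infinitely_often (fun j => a (sigma j)).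
Proof.
move=> [sigma_inv _ sigma_invK] a_io N.
have [i Ni ai] := a_io (\max_(j < N) sigma j).+1.
exists (sigma_inv i); last by rewrite sigma_invK.
rewrite leqNgt; apply/negP => iN; move: Ni; rewrite ltnNge => /negP; apply.
by have := @leq_bigmax _ (fun j : 'I_N => sigma j) (Ordinal iN); rewrite /= sigma_invK.
Qed.

Lemma count_infinitely_often_cvgny (a : pred nat) :
  infinitely_often a -> (fun r => \sum_(k < r) nat_of_bool (a k))%N @ \oo --> \oo.
Proof.
move=> a_io; apply/cvgnyPge => K.
have sum_mono r s : (r <= s)%N -> (\sum_(k < r) a k <= \sum_(k < s) a k)%N.
  by move=> rs; rewrite -(subnKC rs) big_split_ord leq_addr.
have [r Kr] : exists r, (K <= \sum_(k < r) a k)%N.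
  elim: K => [|K [r Kr]]; first by exists 0%N.
  have [j rj aj] := a_io r; exists j.+1.
  by rewrite big_ord_recr /= aj addn1 ltnS (leq_trans Kr) ?sum_mono.
near=> s; apply: leq_trans Kr (sum_mono _ _ _); near: s; exact: nbhs_infty_ge.
Unshelve. all: by end_near. Qed.

Lemma gen_count_cvgny (a : pred nat) sigma p :
  bijective sigma -> infinitely_often a ->
  (fun r => \sum_(k < r) nat_of_bool (a (sigma (p + k.+1))))%N @ \oo --> \oo.
Proof.
move=> sigma_bij /(infinitely_often_bij sigma_bij) a_sigma_io.
apply: (@count_infinitely_often_cvgny (fun k => a (sigma (p + k.+1)%N))) => N.
have [j Nj aj] := a_sigma_io (p + N).+1.
by exists (j - p.+1)%N; [lia | rewrite (_ : (p + (j - p.+1).+1)%N = j) //; lia].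
Qed.

Theorem corollary4p4 (R : realType) (n : nat) (nu : 'cV[R]_n -> R)
  (P : nat -> 'M[R]_n) (c : R) :
  is_vnorm nu ->
  (forall i, col_stochastic (P i)) ->
  (forall i, coeff_erg nu (P i) <= 1) ->
  accumulation_point (fun i => coeff_erg nu (P i)) c ->
  c < 1 ->
  all_gen_prod_weakly_ergodic P.
Proof.
move=> nu_norm P_stoch P_le1 acc c_lt1 sigma sigma_bij p ord x Hx.
pose q := Num.max ((1 + c) / 2) 0.
have q_ge0 : 0 <= q by rewrite le_max lexx orbT.
have q_lt1 : q < 1 by rewrite gt_max; apply/andP; split; lra.
have c_lt_q : c < q by rewrite lt_max; apply/orP; left; lra.
pose good : pred nat := fun i => coeff_erg nu (P i) < q.
have good_count := gen_count_cvgny p sigma_bij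
  (accumulation_point_infinitely_often acc c_lt_q : infinitely_often good).
apply: (nu_cvg0 nu_norm).
apply: (@squeeze_cvgr _ _ _ _ (cst 0)
  (fun r => q ^+ (\sum_(k < r) nat_of_bool (good (sigma (p + k.+1)%N)))%N * nu x)).
- near=> r; rewrite nu_ge0 //=; exact: nu_gen_prod_mulmx_le.
- exact: cvg_cst.
- rewrite -(mul0r (nu x)); apply: cvgMr_tmp; apply: cvg_comp good_count _.
  by apply: cvg_expr; rewrite ger0_norm.
Unshelve. all: by end_near. Qed.
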